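(* Let $r$ be an $\mathfrak s$-matrix on a pre-Lie algebra $(\mathfrak g,\cdot_{\mathfrak g})$. Then $(\mathfrak g^*,\ast_r)$ is a pre-Lie algebra, where $\alpha\ast_r\beta=L^*_{r^\sharp(\alpha)}\beta$ for $\alpha,\beta\in\mathfrak g^*$.
   Context: A pre-Lie algebra is a finite-dimensional vector space $\mathfrak g$ over a field of characteristic $0$ with product $\cdot$ satisfying $(x\cdot y)\cdot z-x\cdot(y\cdot z)=(y\cdot x)\cdot z-y\cdot(x\cdot z)$; $[x,y]_{\mathfrak g}=x\cdot y-y\cdot x$. Define $\langle L^*_x\alpha,y\rangle=-\langle\alpha,x\cdot y\rangle$. For $r\in\mathrm{Sym}^2(\mathfrak g)$, $r^\sharp:\mathfrak g^*\to\mathfrak g$ is $\langle r^\sharp(\alpha),\beta\rangle=r(\alpha,\beta)$. For $r=\sum_ia_i\otimes b_i$, $[r,r]=-\sum_{i,j}a_i\cdot a_j\otimes b_i\otimes b_j+\sum_{i,j}a_i\otimes b_i\cdot a_j\otimes b_j+\sum_{i,j}a_i\otimes a_j\otimes[b_i,b_j]_{\mathfrak g}$; $r$ is an $\mathfrak s$-matrix if $r\in\mathrm{Sym}^2(\mathfrak g)$ and $[r,r]=0$. *)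

From HB Require Import structures.
From mathcomp Require Import all_boot all_order all_algebra.
Set Implicit Arguments. Unset Strict Implicit. Unset Printing Implicit Defensive.
Import GRing.Theory.
Local Open Scope ring_scope.

Definition preLie (K : fieldType) (V : lmodType K) (m : V -> V -> V) : Prop :=
  [/\ (forall x, linear (m x)),
      (forall y, linear (fun x => m x y)) &
      (forall x y z, m (m x y) z - m x (m y z) = m (m y x) z - m y (m x z))].

Notation dual V K := ('Hom(V, K^o)).

(* Elements of g (x) g are written r = sum_i a_i (x) b_i, as a finite list of
   pairs (a_i, b_i); elements of g (x) g (x) g as lists of triples.
   In finite dimension, a tensor is determined by its pairings with
   alpha (x) beta (resp. alpha (x) beta (x) gamma), alpha, beta, gamma in g^*. *)
Definition pair2 (K : fieldType) (V : vectType K) (r : seq (V * V))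
  (alpha beta : dual V K) : K :=
  \sum_(p <- r) (alpha p.1 : K) * (beta p.2 : K).

Definition pair3 (K : fieldType) (V : vectType K) (t : seq (V * V * V))
  (alpha beta gamma : dual V K) : K :=
  \sum_(p <- t) (alpha p.1.1 : K) * (beta p.1.2 : K) * (gamma p.2 : K).

Definition is_sym2 (K : fieldType) (V : vectType K) (r : seq (V * V)) : Prop :=
  forall alpha beta : dual V K,
    pair2 r alpha beta = pair2 [seq (p.2, p.1) | p <- r] alpha beta.

Definition bracket (K : fieldType) (V : vectType K) (m : V -> V -> V) x y :=
  m x y - m y x.

Definition rr (K : fieldType) (V : vectType K) (m : V -> V -> V)
  (r : seq (V * V)) : seq (V * V * V) :=
  [seq (- m p.1 q.1, p.2, q.2) | p <- r, q <- r]
  ++ [seq (p.1, m p.2 q.1, q.2) | p <- r, q <- r]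
  ++ [seq (p.1, q.1, bracket m p.2 q.2) | p <- r, q <- r].

Definition s_matrix (K : fieldType) (V : vectType K) (m : V -> V -> V)
  (r : seq (V * V)) : Prop :=
  is_sym2 r /\ forall alpha beta gamma : dual V K, pair3 (rr m r) alpha beta gamma = 0.

(* r^sharp : g^* -> g, <r^sharp(alpha), beta> = r(alpha, beta). *)
Definition rsharp (K : fieldType) (V : vectType K) (r : seq (V * V))
  (alpha : dual V K) : V :=
  \sum_(p <- r) (alpha p.1 : K) *: p.2.

Definition Lstar (K : fieldType) (V : vectType K) (m : V -> V -> V) (x : V)
  (alpha : dual V K) : dual V K :=
  linfun (fun y : V => (- (alpha (m x y) : K)) : K^o).

Definition ast_r (K : fieldType) (V : vectType K) (m : V -> V -> V)
  (r : seq (V * V)) (alpha beta : dual V K) : dual V K :=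
  Lstar m (rsharp r alpha) beta.

From HB Require Import structures.
From mathcomp Require Import all_boot all_order all_algebra ring.
Set Implicit Arguments.
Unset Strict Implicit.
Unset Printing Implicit Defensive.

Import GRing.Theory.
Local Open Scope ring_scope.

(* Pairing [[r, r]] with alpha (x) beta (x) gamma, the three sums of its
   definition become <gamma, r#(beta * alpha)>, -<gamma, r#(alpha * beta)> and
   <gamma, [r# alpha, r# beta]> (the first one after using the symmetry of r).
   So [[r, r]] = 0 says that r# maps the commutator of *_r to the bracket of g.
   Since x |-> L_x is a Lie algebra representation for a pre-Lie algebra, so is
   x |-> L^*_x, and then
   (alpha * beta) * gamma - (beta * alpha) * gamma = L^*_[r# alpha, r# beta] gamma
     = [L^*_(r# alpha), L^*_(r# beta)] gamma,
   which is the pre-Lie identity for *_r. *)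

Section LinearMap.
Variables (R : pzRingType) (U W : lmodType R) (f : U -> W).
Hypothesis f_linear : linear f.

Let F : {linear U -> W} := HB.pack f (GRing.isLinear.Build R U W *:%R f f_linear).

Lemma linfD : {morph f : x y / x + y}. Proof. exact: linearD F. Qed.
Lemma linfB : {morph f : x y / x - y}. Proof. exact: linearB F. Qed.
Lemma linfZ a : {morph f : x / a *: x}. Proof. exact: linearZ_LR F a. Qed.
Lemma linf_sum I (s : seq I) (G : I -> U) :
  f (\sum_(i <- s) G i) = \sum_(i <- s) f (G i).
Proof. exact (raddf_sum F s xpredT G). Qed.

End LinearMap.

Lemma linfunE_linear (R : nzRingType) (U W : vectType R) (f : U -> W) :
  linear f -> linfun f =1 f.
Proof.
move=> f_linear.
exact: lfunE (HB.pack f (GRing.isLinear.Build R U W *:%R f f_linear)).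
Qed.

Lemma preLie_bracket_mul (K : fieldType) (V : vectType K) (m : V -> V -> V) x y z :
  preLie m -> m (bracket m x y) z = m x (m y z) - m y (m x z).
Proof.
case=> _ m_linl m_assoc; rewrite /bracket (linfB (m_linl z)).
rewrite -[m (m x y) z](subrK (m x (m y z))) m_assoc.
by rewrite addrAC (addrAC (m (m y x) z)) subrr add0r addrC.
Qed.

Section DualProduct.
Variables (K : fieldType) (V : vectType K) (m : V -> V -> V) (r : seq (V * V)).
Hypothesis m_linr : forall x, linear (m x).
Hypothesis m_linl : forall y, linear (m^~ y).

Local Notation ast := (ast_r m r).
Local Notation rs := (rsharp r).

Lemma ast_rE (a b : dual V K) y : ast a b y = - b (m (rs a) y).
Proof.
rewrite /ast_r /Lstar linfunE_linear // => c u v.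
by rewrite (linfD (m_linr _)) (linfZ (m_linr _)) linearD linearZ /= opprD scalerN.
Qed.

Lemma rsharp_linear : linear rs.
Proof.
move=> c a b; rewrite /rsharp scaler_sumr -big_split; apply: eq_bigr => p _.
by rewrite add_lfunE scale_lfunE scalerDl scalerA.
Qed.

Lemma dual_rsharp (a g : dual V K) :
  g (rs a) = \sum_(p <- r) a p.1 * g p.2 :> K.
Proof. by rewrite /rsharp linear_sum; apply: eq_bigr => p _; rewrite linearZ. Qed.

Lemma dual_mul_rsharpl (a b : dual V K) y :
  b (m (rs a) y) = \sum_(q <- r) a q.1 * b (m q.2 y) :> K.
Proof.
rewrite /rsharp (linf_sum (m_linl y)) linear_sum; apply: eq_bigr => q _.
by rewrite (linfZ (m_linl y)) linearZ.
Qed.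

Lemma dual_mul_rsharpr (a b : dual V K) x :
  b (m x (rs a)) = \sum_(q <- r) a q.1 * b (m x q.2) :> K.
Proof.
rewrite /rsharp (linf_sum (m_linr x)) linear_sum; apply: eq_bigr => q _.
by rewrite (linfZ (m_linr x)) linearZ.
Qed.

Lemma dual_mulr_linear (a : dual V K) y : linear (fun v => a (m v y) : K^o).
Proof. by move=> c u v; rewrite (linfD (m_linl y)) (linfZ (m_linl y)) linearD linearZ. Qed.

Lemma dual_rsharp_ast (a b g : dual V K) :
  g (rs (ast a b)) =
  - \sum_(p <- r) \sum_(q <- r) a q.1 * b (m q.2 p.1) * g p.2 :> K.
Proof.
rewrite dual_rsharp -sumrN; apply: eq_bigr => p _.
by rewrite ast_rE dual_mul_rsharpl mulNr mulr_suml -sumrN.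
Qed.

Lemma dual_bracket_rsharp (a b g : dual V K) :
  g (bracket m (rs a) (rs b)) =
  \sum_(p <- r) \sum_(q <- r) a p.1 * b q.1 * g (bracket m p.2 q.2) :> K.
Proof.
rewrite /bracket linearB /= !dual_mul_rsharpl.
under [X in X - _ = _]eq_bigr do rewrite dual_mul_rsharpr mulr_sumr.
under [X in _ - X = _]eq_bigr do rewrite dual_mul_rsharpr mulr_sumr.
rewrite [X in _ - X = _]exchange_big -sumrB; apply: eq_bigr => p _.
rewrite -sumrB; apply: eq_bigr => q _.
by rewrite linearB /= mulrBr !mulrA (mulrC (b q.1)).
Qed.

Hypothesis r_sym : is_sym2 r.

Lemma pair3_rr_mull (a b g : dual V K) :
  \sum_(p <- r) \sum_(q <- r) a (- m p.1 q.1) * b p.2 * g q.2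
  = g (rs (ast b a)) :> K.
Proof.
rewrite dual_rsharp_ast exchange_big -sumrN; apply: eq_bigr => q _.
have aq := linfunE_linear (dual_mulr_linear a q.1).
have sym_q : \sum_(p <- r) a (m p.1 q.1) * b p.2 = \sum_(p <- r) b p.1 * a (m p.2 q.1) :> K.
  transitivity (pair2 r (linfun (fun v => a (m v q.1) : K^o)) b).
    by apply: eq_bigr => p _; rewrite aq.
  by rewrite r_sym /pair2 big_map; apply: eq_bigr => p _; rewrite aq /= mulrC.
rewrite -mulr_suml -sym_q mulr_suml -sumrN; apply: eq_bigr => p _.
by rewrite linearN !mulNr.
Qed.

Lemma pair3_rr_mulr (a b g : dual V K) :
  \sum_(p <- r) \sum_(q <- r) a p.1 * b (m p.2 q.1) * g q.2
  = - g (rs (ast a b)) :> K.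
Proof. by rewrite dual_rsharp_ast opprK exchange_big. Qed.

Lemma rsharp_ast_commutator (a b g : dual V K) :
  pair3 (rr m r) a b g = 0 ->
  g (rs (ast a b)) - g (rs (ast b a)) = g (bracket m (rs a) (rs b)) :> K.
Proof.
rewrite /pair3 /rr !big_cat !big_allpairs_dep /= pair3_rr_mull pair3_rr_mulr.
rewrite -dual_bracket_rsharp => rr0.
by apply/eqP; rewrite -subr_eq0 -oppr_eq0 -rr0; apply/eqP; ring.
Qed.

End DualProduct.

Lemma ast_r_preLie (K : fieldType) (V : vectType K) (m : V -> V -> V)
    (r : seq (V * V)) :
  preLie m -> s_matrix m r -> preLie (ast_r m r).
Proof.
move=> m_preLie [r_sym r_rr]; have [m_linr m_linl _] := m_preLie.
split.
- move=> a c b b'; apply/lfunP => y.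
  by rewrite add_lfunE scale_lfunE !ast_rE // add_lfunE scale_lfunE /= opprD scalerN.
- move=> b c a a'; apply/lfunP => y.
  rewrite add_lfunE scale_lfunE !ast_rE // rsharp_linear.
  by rewrite (linfD (m_linl y)) (linfZ (m_linl y)) linearD linearZ /= opprD scalerN.
- move=> a b c; apply/lfunP => y; rewrite !add_lfunE !opp_lfunE !ast_rE //.
  have cy_linear := dual_mulr_linear m_linl c y.
  have := rsharp_ast_commutator m_linr m_linl r_sym
            (r_rr a b (linfun (fun v => c (m v y) : K^o))).
  rewrite !(linfunE_linear cy_linear) /= (preLie_bracket_mul _ _ _ m_preLie) linearB /=.
  move/eqP; rewrite -subr_eq0 => /eqP comm0.
  by apply/eqP; rewrite -subr_eq0 -oppr_eq0 -comm0; apply/eqP; ring.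
Qed.

Theorem proposition4p2 (K : fieldType) (V : vectType K) (m : V -> V -> V)
  (r : seq (V * V)) :
  [pchar K] =i pred0 ->
  preLie m ->
  s_matrix m r ->
  preLie (ast_r m r).
Proof.
by move=> _; exact: ast_r_preLie.
Qed.
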